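(* Consider a binary treatment variable $X\in\{0,1\}$, a binary ''intention to treat'' variable $X^*\in\{0,1\}$, and a discrete response variable $Y$, under an observational regime and, for $x\in\{0,1\}$, an interventional regime ''$X\leftarrow x$''. Write $\Pr(\cdot)$ for observational probabilities and $\Pr(\cdot\mid X\leftarrow x)$ for probabilities under intervention $X\leftarrow x$. Assume: (i) in the observational regime $X=X^*$; (ii) $\Pr(X^*=x^*\mid X\leftarrow x)=\Pr(X^*=x^* )$ for all $x,x^*\in\{0,1\}$, where $\Pr(X^*=x^* )=\Pr(X=x^* )$; (iii) $\Pr(Y=y\mid X^*=x,X=x)=\Pr(Y=y\mid X^*=x,X\leftarrow x)$ for all $x\in\{0,1\}$ and all $y$. Suppose the observational joint distribution of $(X,Y)$ is known with $0<\Pr(X=1)<1$, and the distribution of $Y$ under each intervention $X\leftarrow x$ ($x=0,1$) is known. Then, for each $x\in\{0,1\}$, the joint distribution of $(X^*,Y)$ under the intervention $X\leftarrow x$ is identified, i.e. uniquely determined by these known quantities.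
   Context: $X^*$ (''intention to treat'') denotes the treatment a patient or their doctor would choose if unconstrained; it is a pre-treatment covariate. In the interventional regime $X\leftarrow x$, treatment $x$ is imposed externally without regard to $X^*$. ''Identified'' means uniquely determined by the observational joint distribution of $(X,Y)$ together with the interventional distributions of $Y$. *)

From mathcomp Require Import all_boot all_order all_algebra.
From mathcomp Require Import boolp classical_sets reals constructive_ereal ereal esum.
Set Implicit Arguments. Unset Strict Implicit. Unset Printing Implicit Defensive.
Import Order.TTheory GRing.Theory Num.Theory.
Local Open Scope classical_set_scope.
Local Open Scope ring_scope.

(* Discrete distributions are given by probability mass functions on a
   choiceType (the support may be any countable subset); sums via esum. *)
Section ITT.
Context {R : realType}.

Definition is_pmf {T : choiceType} (p : T -> R) : Prop :=
  (forall t, 0 <= p t) /\ (\esum_(t in [set: T]) (p t)%:E = 1)%E.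

Definition prob {T : choiceType} (p : T -> R) (A : set T) : R :=
  fine (\esum_(t in A) (p t)%:E).

Definition cprob {T : choiceType} (p : T -> R) (A B : set T) : R :=
  prob p (A `&` B) / prob p B.

Context {Y : choiceType}.

(* Observational regime: pobs is the joint pmf of (Xs, X, Y), outcomes ((xs, x), y).
   Interventional regime X <- x: q x is the joint pmf of (Xs, Y), outcomes (xs, y)
   (in that regime X = x deterministically). *)
Definition ITT_model (pobs : bool * bool * Y -> R) (q : bool -> bool * Y -> R) : Prop :=
  [/\ is_pmf pobs,
      (forall x, is_pmf (q x)),
      (* (i) X = Xs in the observational regime (almost surely) *)
      prob pobs [set t | ~ (t.1.1 = t.1.2)] = 0,
      (* (ii) Pr(Xs = xs | X <- x) = Pr(Xs = xs), Xs = intention to treat *)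
      (forall x xs, prob (q x) [set t | t.1 = xs] = prob pobs [set t | t.1.1 = xs]) &
      (forall x y,
         cprob pobs [set t | t.2 = y] [set t | t.1.1 = x /\ t.1.2 = x]
         = cprob (q x) [set t | t.2 = y] [set t | t.1 = x])].
End ITT.

From mathcomp Require Import all_boot all_order all_algebra.
From mathcomp Require Import boolp classical_sets reals constructive_ereal ereal esum.
Set Implicit Arguments. Unset Strict Implicit. Unset Printing Implicit Defensive.
Import Order.TTheory GRing.Theory Num.Theory.
Local Open Scope classical_set_scope.
Local Open Scope ring_scope.

(* Under intervention X <- x the compliers X* = x behave as in the observational
   regime: by (ii) and (i) their mass Pr(X* = x | X <- x) is Pr(X = x), so (iii)
   gives Pr(X* = x, Y = y | X <- x) = Pr(X = x, Y = y).  The remaining cell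
   Pr(X* = 1 - x, Y = y | X <- x) is then the known Pr(Y = y | X <- x) minus it. *)

Section PmfProb.
Context {R : realType} {T : choiceType} {p : T -> R}.
Hypothesis pmf_p : is_pmf p.

Lemma esum_prob (A : set T) : \esum_(t in A) (p t)%:E = (prob p A)%:E.
Proof.
case: pmf_p => p_ge0 p_sum1.
have esum_ge0' (B : set T) : (0 <= \esum_(t in B) (p t)%:E)%E.
  by apply: esum_ge0 => t _; rewrite lee_fin.
have esum_le1 : (\esum_(t in A) (p t)%:E <= 1)%E.
  rewrite -p_sum1 (esumID A [set: T]) ?setTI; first exact: leeDl (esum_ge0' _).
  by move=> t _; rewrite lee_fin.
rewrite /prob fineK //; apply/fin_numP; split.
  by apply: contraTN isT => /eqP esumA; have := esum_ge0' A; rewrite esumA.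
by apply: contraTN isT => /eqP esumA; move: esum_le1; rewrite esumA.
Qed.

Lemma prob_ge0 (A : set T) : 0 <= prob p A.
Proof.
by rewrite -lee_fin -esum_prob; apply: esum_ge0 => t _; rewrite lee_fin; case: pmf_p.
Qed.

Lemma prob_setID (A B : set T) :
  prob p A = prob p (A `&` B) + prob p (A `&` ~` B).
Proof.
apply: EFin_inj; rewrite EFinD -!esum_prob.
by apply: esumID => t _; rewrite lee_fin; case: pmf_p.
Qed.

Lemma prob_set1 (t : T) : prob p [set t] = p t.
Proof. by rewrite /prob esum_set1 //= lee_fin; case: pmf_p. Qed.

Lemma le_prob (A B : set T) : A `<=` B -> prob p A <= prob p B.
Proof.
move=> AB; rewrite (prob_setID B A) setIidr //.
by rewrite lerDl prob_ge0.
Qed.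

Lemma subset_prob0 (A N : set T) : A `<=` N -> prob p N = 0 -> prob p A = 0.
Proof.
by move=> AN N0; apply/eqP; rewrite eq_le prob_ge0 andbT -N0 le_prob.
Qed.

Lemma prob_setI_ae (A B N : set T) :
  A `&` ~` B `<=` N -> prob p N = 0 -> prob p A = prob p (A `&` B).
Proof. by move=> ABN N0; rewrite (prob_setID A B) (subset_prob0 ABN N0) addr0. Qed.

End PmfProb.

Lemma prob_setI_of_cprob {R : realType} {T U : choiceType}
    (p : T -> R) (q : U -> R) (A B : set T) (A' B' : set U) :
  is_pmf p -> is_pmf q -> prob p B = prob q B' ->
  cprob p A B = cprob q A' B' -> prob p (A `&` B) = prob q (A' `&` B').
Proof.
rewrite /cprob => pmf_p pmf_q eqB.
have [B0 _|B_neq0] := eqVneq (prob p B) 0.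
  have B'0 : prob q B' = 0 by rewrite -eqB.
  by rewrite (subset_prob0 pmf_p (@subIsetr _ A B) B0)
             (subset_prob0 pmf_q (@subIsetr _ A' B') B'0).
by rewrite -eqB => /(congr1 ( *%R^~ (prob p B))); rewrite !divfK.
Qed.

Lemma prob_snd_bool {R : realType} {Y : choiceType} (q : bool * Y -> R) :
  is_pmf q -> forall x y,
  prob q [set t | t.2 = y] = q (x, y) + q (~~ x, y).
Proof.
move=> pmf_q x y; rewrite (prob_setID pmf_q _ [set t | t.1 = x]).
rewrite -!(prob_set1 pmf_q); congr (prob q _ + prob q _);
  apply/seteqP; split => -[a c] /=.
- by move=> [-> ->].
- by case=> -> ->.
- by case: a x => -[] [-> /=].
- by case=> -> ->; case: x.
Qed.

Section ITTModel.
Context {R : realType} {Y : choiceType}.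
Variables (p : bool * bool * Y -> R) (q : bool -> bool * Y -> R).
Hypothesis model : ITT_model p q.

Let pmf_p : is_pmf p. Proof. by case: model. Qed.
Let pmf_q x : is_pmf (q x). Proof. by case: model. Qed.
Let noncompliance0 : prob p [set t | t.1.1 <> t.1.2] = 0.
Proof. by case: model. Qed.

Lemma prob_intention_treated (x : bool) :
  prob p [set t | t.1.1 = x] = prob p [set t | t.1.1 = x /\ t.1.2 = x].
Proof.
rewrite (prob_setI_ae pmf_p (B := [set t | t.1.2 = x]) _ noncompliance0).
  by congr prob; apply/seteqP; split => t /=; case.
by move=> t [/= -> tx] e; apply: tx; rewrite /= -e.
Qed.

Lemma prob_treated_response (x : bool) (y : Y) :
  prob p [set t | t.1.2 = x /\ t.2 = y] = p ((x, x), y).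
Proof.
rewrite (prob_setI_ae pmf_p (B := [set t | t.1.1 = x]) _ noncompliance0).
  rewrite -(prob_set1 pmf_p); congr prob; apply/seteqP; split => -[[a b] c] /=.
    by move=> [[-> ->] ->].
  by case=> -> -> ->.
by move=> t [[/= -> _] tx] e; apply: tx.
Qed.

Lemma interv_compliers (x : bool) (y : Y) :
  q x (x, y) = prob p [set t | t.1.2 = x /\ t.2 = y].
Proof.
have [_ _ _ intention_invariant response_invariant] := model.
rewrite prob_treated_response -(prob_set1 pmf_p) -(prob_set1 (pmf_q x)).
have -> : [set ((x, x), y)] =
    [set t | t.2 = y] `&` [set t | t.1.1 = x /\ t.1.2 = x].
  by apply/seteqP; split => -[[a b] c] /=; [case=> -> -> ->|move=> [-> [-> ->]]].
have -> : [set (x, y)] = [set t | t.2 = y] `&` [set t : bool * Y | t.1 = x].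
  by apply/seteqP; split => -[a c] /=; [case=> -> ->|move=> [-> ->]].
apply/esym/(prob_setI_of_cprob pmf_p (pmf_q x)); last exact: response_invariant.
by rewrite intention_invariant prob_intention_treated.
Qed.

End ITTModel.

Theorem corollary1 (R : realType) (Y : choiceType)
  (p1 p2 : bool * bool * Y -> R) (q1 q2 : bool -> bool * Y -> R) :
  ITT_model p1 q1 -> ITT_model p2 q2 ->
  0 < prob p1 [set t | t.1.2 = true] < 1 ->
  (forall x y, prob p1 [set t | t.1.2 = x /\ t.2 = y]
               = prob p2 [set t | t.1.2 = x /\ t.2 = y]) ->
  (forall x y, prob (q1 x) [set t | t.2 = y] = prob (q2 x) [set t | t.2 = y]) ->
  forall x, q1 x = q2 x.
Proof.
move=> model1 model2 _ obs_eq interv_eq x.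
have compliers_eq y : q1 x (x, y) = q2 x (x, y).
  by rewrite (interv_compliers model1) (interv_compliers model2) obs_eq.
apply: funext => -[xs y].
have [->|/negPf xs_neq_x] := eqVneq xs x; first exact: compliers_eq.
have -> : xs = ~~ x by move: xs_neq_x; case: xs; case: (x).
have [_ pmf_q1 _ _ _] := model1; have [_ pmf_q2 _ _ _] := model2.
have := interv_eq x y.
rewrite (prob_snd_bool (pmf_q1 x) x) (prob_snd_bool (pmf_q2 x) x) compliers_eq.
exact: addrI.
Qed.
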